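(* Let $\mathcal{G}=(V,E)$ be an unweighted simple directed graph, let $i\in V$, and let $\phi$ be a spanning converging forest chosen uniformly at random from the set $\mathcal{F}$ of all spanning converging forests of $\mathcal{G}$. Then $$\overline{\omega}_{ii}(\phi)=\frac{1}{1+d_i}\Big(1+\sum_{k\in N^-_i}\widehat{\omega}_{ik}(\phi)\Big)$$ is an unbiased estimator of $\omega_{ii}$, its variance is $${\rm Var}(\overline{\omega}_{ii})=\frac{3\omega_{ii}}{1+d_i}-\frac{2}{(1+d_i)^2}-\omega_{ii}^2,$$ and this variance is always less than or equal to the variance of the estimator $\widehat{\omega}_{ii}(\phi)$.
   Context: $\mathcal{G}=(V,E)$ has $n$ nodes; $a_{ij}=1$ if $(i,j)\in E$ and $0$ otherwise. $d_i=\sum_j a_{ij}$ is the out-degree of $i$, $\mathbf{D}=\mathrm{diag}(d_1,\dots,d_n)$, $\mathbf{L}=\mathbf{D}-\mathbf{A}$, and the forest matrix is $\mathbf{\Omega}=(\mathbf{I}+\mathbf{L})^{-1}=(\omega_{ij})$. $N^-_i=\{k:(k,i)\in E\}$ is the set of in-neighbors of $i$. A rooted converging tree is a weakly connected digraph without cycles in which one node (the root) has out-degree $0$ and every other node has out-degree $1$ (an isolated node is such a tree rooted at itself). A spanning converging forest of $\mathcal{G}$ is a spanning subgraph (all of $V$, a subset of $E$) whose weakly connected components are rooted converging trees; $r_\phi(i)$ is the root of the tree of $\phi$ containing $i$. The basic estimator is $\widehat{\omega}_{ij}(\phi)=\mathbb{I}_{\{r_\phi(i)=j\}}$ (1 if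 $r_\phi(i)=j$, else 0). *)

From HB Require Import structures.
From mathcomp Require Import all_boot all_order all_algebra.
Set Implicit Arguments. Unset Strict Implicit. Unset Printing Implicit Defensive.
Import Order.TTheory GRing.Theory Num.Theory.
Local Open Scope ring_scope.

(* A digraph on nodes 'I_n is given by its adjacency relation e : a_ij = 1 iff e i j.
   "Simple" means no self-loops: e is irreflexive (multi-edges impossible by construction). *)
Definition simple_digraph (n : nat) (e : rel 'I_n) : Prop := forall i, ~~ e i i.

Definition edge_set (n : nat) (e : rel 'I_n) : {set 'I_n * 'I_n} :=
  [set p | e p.1 p.2].

Definition outdeg (n : nat) (e : rel 'I_n) (i : 'I_n) : nat := #|[set j | e i j]|.
Definition in_nbrs (n : nat) (e : rel 'I_n) (i : 'I_n) : {set 'I_n} := [set k | e k i].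

Definition laplacian (R : comUnitRingType) (n : nat) (e : rel 'I_n) : 'M[R]_n :=
  \matrix_(i, j) ((i == j)%:R * (outdeg e i)%:R - (e i j)%:R).
Definition forest_matrix (R : comUnitRingType) (n : nat) (e : rel 'I_n) : 'M[R]_n :=
  invmx (1%:M + laplacian R e).

Definition frel (n : nat) (F : {set 'I_n * 'I_n}) : rel 'I_n := fun a b => (a, b) \in F.

(* Spanning converging forest: a subset F of E in which every node has out-degree
   at most 1 and there is no directed cycle.  (Its weakly connected components are
   then exactly rooted converging trees, the roots being the out-degree-0 nodes.) *)
Definition is_scf (n : nat) (e : rel 'I_n) (F : {set 'I_n * 'I_n}) : bool :=
  [&& F \subset edge_set e,
      [forall x : 'I_n, #|[set y | (x, y) \in F]| <= 1]%N &
      [forall x : 'I_n, forall y : 'I_n, ((x, y) \in F) ==> ~~ connect (frel F) y x]].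

Definition scforests (n : nat) (e : rel 'I_n) : {set {set 'I_n * 'I_n}} :=
  [set F | is_scf e F].

Definition fnext (n : nat) (F : {set 'I_n * 'I_n}) (x : 'I_n) : 'I_n :=
  if [pick y | (x, y) \in F] is Some y then y else x.

(* r_phi(i): the root of the tree containing i (n steps suffice in an acyclic forest) *)
Definition froot (n : nat) (F : {set 'I_n * 'I_n}) (x : 'I_n) : 'I_n :=
  iter n (fnext F) x.

Definition omega_hat (R : ringType) (n : nat) (i j : 'I_n) (F : {set 'I_n * 'I_n}) : R :=
  (froot F i == j)%:R.

Definition omega_bar (R : fieldType) (n : nat) (e : rel 'I_n) (i : 'I_n)
    (F : {set 'I_n * 'I_n}) : R :=
  (1 + (outdeg e i)%:R)^-1 * (1 + \sum_(k in in_nbrs e i) omega_hat R i k F).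

Definition unif_exp (R : fieldType) (n : nat) (e : rel 'I_n)
    (X : {set 'I_n * 'I_n} -> R) : R :=
  (#|scforests e|%:R)^-1 * \sum_(F in scforests e) X F.

Definition unif_var (R : fieldType) (n : nat) (e : rel 'I_n)
    (X : {set 'I_n * 'I_n} -> R) : R :=
  unif_exp e (fun F => (X F - unif_exp e X) ^+ 2).

From HB Require Import structures.
From mathcomp Require Import all_boot all_order all_algebra fingroup perm.
From mathcomp Require Import zify ring lra.
Set Implicit Arguments. Unset Strict Implicit. Unset Printing Implicit Defensive.
Import Order.TTheory GRing.Theory Num.Theory.

(* A spanning converging forest is a parent function c : 'I_n -> option 'I_n that
   follows arcs of the graph and has no cycle.  Row x of I + L is the sum, over the
   possible parents o of x, of the rows e_x - e_o (with e_None = 0), so by multilinearity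
   det (I + L) is the sum over parent functions c of det (I - N_c), which is 1 when c is
   acyclic and 0 otherwise.  The same expansion of the (k, i) cofactor, followed by a
   sign-reversing involution at k, counts the forests in which i has root k: omega_ik is
   the probability that r(i) = k.  Now omega_bar = (1 + X) / (1 + d_i), where X is the
   indicator of r(i) in N^-_i, and the (i, i) entry of Omega (I + L) = I reads
   omega_ii (1 + d_i) = 1 + E X.  This gives unbiasedness, and the variance
   E X (1 - E X) / (1 + d_i)^2 is compared with omega_ii (1 - omega_ii), the variance
   of omega_hat_ii. *)

Section ParentFunctions.

Variable n : nat.
Local Notation pfun := {ffun 'I_n -> option 'I_n}.
Implicit Types (c : pfun) (x y z k : 'I_n).

Definition parent_rel c : rel 'I_n := fun x y => c x == Some y.

Definition acyclic c :=
  [forall x, forall y, (c x == Some y) ==> ~~ connect (parent_rel c) y x].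

Lemma connect_parent c x y z : c x = Some y ->
  connect (parent_rel c) x z -> x != z -> connect (parent_rel c) y z.
Proof.
move=> cxy /connectP [[|y' p] /=]; first by move=> _ ->; rewrite eqxx.
case/andP=> /eqP; rewrite cxy => -[<-] pth zl _.
by apply/connectP; exists p.
Qed.

Lemma connect_root c x z : c x = None -> connect (parent_rel c) x z -> z = x.
Proof. by move=> cx /connectP [[|y p] /=]; [move=> _ -> | rewrite /parent_rel cx]. Qed.

Lemma connect_on_cycle c x y z : c x = Some y -> connect (parent_rel c) y x ->
  connect (parent_rel c) x z -> connect (parent_rel c) z x.
Proof.
move=> cxy cyx /connectP [p pth ->].
suff back a : connect (parent_rel c) a x -> path (parent_rel c) a p ->
    connect (parent_rel c) (last a p) x by exact: back (connect0 _ _) pth.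
elim: p a {pth} => [|b p IH] a //= cax /andP [/eqP cab pth]; apply: IH pth.
have [ax|ax] := eqVneq a x; first by move: cab; rewrite ax cxy => -[<-].
exact: connect_parent cab cax ax.
Qed.

Definition height c x := #|[set z | connect (parent_rel c) x z]|.

Lemma height_gt0 c x : (0 < height c x)%N.
Proof. by apply/card_gt0P; exists x; rewrite inE connect0. Qed.

Lemma height_le c x : (height c x <= n)%N.
Proof. by rewrite -[n]card_ord max_card. Qed.

Lemma height_parent c x y : acyclic c -> c x = Some y -> (height c y < height c x)%N.
Proof.
move=> /forallP /(_ x) /forallP /(_ y) acx cxy; rewrite cxy eqxx /= in acx.
apply: proper_card; apply/properP; split.
  apply/subsetP => z; rewrite !inE; apply: connect_trans.
  by apply: connect1; rewrite /parent_rel cxy.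
by exists x; rewrite !inE ?connect0.
Qed.

Lemma acyclic_of_rank (h : 'I_n -> nat) c :
  (forall x y, c x = Some y -> (h y < h x)%N) -> acyclic c.
Proof.
move=> hlt; have hle x z : connect (parent_rel c) x z -> (h z <= h x)%N.
  case/connectP=> p; elim: p x => [|y p IH] x /=; first by move=> _ ->.
  case/andP=> /eqP /hlt hyx /IH hz /hz hzy.
  exact: leq_trans hzy (ltnW hyx).
apply/forallP=> x; apply/forallP=> y; apply/implyP=> /eqP /hlt hyx.
by apply/negP=> /hle; rewrite leqNgt hyx.
Qed.

Definition set_parent c k (o : option 'I_n) : pfun :=
  [ffun x => if x == k then o else c x].

Lemma acyclic_set_parent c k i : c k = None ->
  acyclic (set_parent c k (Some i)) = acyclic c && ~~ connect (parent_rel c) i k.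
Proof.
move=> ck; set c' := set_parent c k (Some i).
have sub : subrel (parent_rel c) (parent_rel c').
  by move=> x y; rewrite /parent_rel ffunE; case: (eqVneq x k) => [->|]; rewrite ?ck.
have con_sub : subrel (connect (parent_rel c)) (connect (parent_rel c')).
  by apply: connect_sub => x y /sub /connect1.
have [acc|] /= := boolP (acyclic c); last first.
  apply: contraNF => /forallP acc'; apply/forallP=> x; apply/forallP=> y.
  apply/implyP=> /eqP cxy; have := acc' x; move/forallP/(_ y).
  rewrite ffunE; case: (eqVneq x k) => [xk|_]; first by move: cxy; rewrite xk ck.
  by rewrite cxy eqxx /=; apply: contra; apply: con_sub.
have [cik|ncik] /= := boolP (connect (parent_rel c) i k).
  apply/negP=> /forallP /(_ k) /forallP /(_ i).
  by rewrite ffunE !eqxx /= con_sub.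
(* A rank: the nodes from which k is reachable are lifted above all heights. *)
pose h x := (height c x + connect (parent_rel c) x k * (height c i).+1)%N.
apply: (@acyclic_of_rank h) => x y; rewrite ffunE.
have [-> [<-]|xk cxy] := eqVneq x k.
  by rewrite /h (negbTE ncik) connect0 mul0n addn0 mul1n ltn_addl.
have hxy := height_parent acc cxy; rewrite /h.
have [cxk|ncxk] := boolP (connect (parent_rel c) x k).
  by rewrite (connect_parent cxy cxk xk) ltn_add2r.
suff -> : connect (parent_rel c) y k = false by rewrite !mul0n !addn0.
apply: contraNF ncxk; apply: connect_trans; apply: connect1.
by rewrite /parent_rel cxy.
Qed.

Definition parent_step c x := odflt x (c x).

Lemma connect_iter_parent c m x : connect (parent_rel c) x (iter m (parent_step c) x).
Proof.
elim: m => [|m IH] /=; first exact: connect0.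
apply: connect_trans IH _; rewrite /parent_step.
by case cx: (c _) => [y|] /=; [apply: connect1; rewrite /parent_rel cx | exact: connect0].
Qed.

Lemma iter_parent_root c k m : c k = None -> iter m (parent_step c) k = k.
Proof. by move=> ck; elim: m => //= m ->; rewrite /parent_step ck. Qed.

Lemma iter_parent_path c x p :
  path (parent_rel c) x p -> iter (size p) (parent_step c) x = last x p.
Proof.
elim: p x => [|y p IH] x //= /andP [/eqP cxy pth].
by rewrite -iterS iterSr {2}/parent_step cxy IH.
Qed.

Lemma iter_parent_connect c x k : c k = None -> connect (parent_rel c) x k ->
  iter n (parent_step c) x = k.
Proof.
move=> ck /connectP [p pth ekp]; subst k; move: ck.
case/shortenP: pth => p' pth' up' _ ck.
have sz : (size p' <= n)%N.
  by apply: ltnW; have := max_card (mem (x :: p')); rewrite (card_uniqP up') card_ord.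
by rewrite -[X in iter X](subnK sz) iterD (iter_parent_path pth') (iter_parent_root _ ck).
Qed.

(* Each non-root step lowers the height, which lies in [1, n]. *)
Lemma root_iter_parent c x : acyclic c -> c (iter n (parent_step c) x) = None.
Proof.
move=> acc; pose it m := iter m (parent_step c) x.
have desc m : c (it m) != None -> (height c (it m) + m <= height c x)%N.
  elim: m => [|m IH]; first by rewrite addn0.
  rewrite /it iterS /parent_step -/(it m); case cm: (c (it m)) => [y|] /=.
    by move=> _; rewrite addnS (leq_trans _ (IH _)) ?cm // ltn_add2r height_parent.
  by rewrite cm.
apply/eqP; apply: contraT => /desc; have := height_gt0 c (it n).
by have := height_le c x; lia.
Qed.

End ParentFunctions.

Section Forests.

Variables (n : nat) (e : rel 'I_n).
Local Notation pfun := {ffun 'I_n -> option 'I_n}.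
Implicit Types (c : pfun) (x y k : 'I_n).

Definition arcs c : {set 'I_n * 'I_n} := [set p | c p.1 == Some p.2].

Lemma frel_arcs c : frel (arcs c) =2 parent_rel c.
Proof. by move=> x y; rewrite /frel inE. Qed.

Lemma fnext_arcs c : fnext (arcs c) =1 parent_step c.
Proof.
move=> x; rewrite /fnext /parent_step.
case: pickP => [y|none]; first by rewrite inE => /eqP ->.
by case cx: (c x) => [y|] //; have := none y; rewrite inE cx eqxx.
Qed.

Lemma froot_arcsE c x k : acyclic c ->
  (froot (arcs c) x == k) = (c k == None) && connect (parent_rel c) x k.
Proof.
rewrite /froot (eq_iter (fnext_arcs c)) => acc; apply/eqP/andP => [<-|[/eqP ck]].
  by rewrite root_iter_parent ?connect_iter_parent.
exact: iter_parent_connect.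
Qed.

Definition on_edge x (o : option 'I_n) := if o is Some y then e x y else true.

Definition on_edges c := [forall x, on_edge x (c x)].

Lemma is_scf_arcs c : is_scf e (arcs c) = on_edges c && acyclic c.
Proof.
have sub_edges : (arcs c \subset edge_set e) = on_edges c.
  apply/subsetP/forallP => [sub x|on [x y]]; rewrite ?inE /=.
    by case cx: (c x) => [y|] //=; have := sub (x, y); rewrite !inE cx eqxx; apply.
  by move=> /eqP cxy; have := on x; rewrite cxy.
have outdeg_le1 : [forall x, #|[set y | (x, y) \in arcs c]| <= 1]%N.
  apply/forallP => x; apply/card_le1_eqP => y z; rewrite !inE /= => /eqP -> /eqP.
  by case.
rewrite /is_scf sub_edges outdeg_le1; congr (_ && _).
apply: eq_forallb => x; apply: eq_forallb => y.
by rewrite inE (eq_connect (frel_arcs c)).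
Qed.

Lemma arcs_inj : injective arcs.
Proof.
move=> c c' eq_arcs; apply/ffunP => x; case cx: (c x) => [y|].
  have : (x, y) \in arcs c by rewrite inE cx.
  by rewrite eq_arcs inE /= => /eqP ->.
case c'x: (c' x) => [y|] //.
have : (x, y) \in arcs c' by rewrite inE c'x.
by rewrite -eq_arcs inE /= cx.
Qed.

Lemma scforestsE : scforests e = arcs @: [set c | on_edges c && acyclic c].
Proof.
apply/setP => F; rewrite inE; apply/idP/imsetP => [scfF|[c]]; last first.
  by rewrite inE -is_scf_arcs => scfc ->.
have arcsF : arcs [ffun x => [pick y | (x, y) \in F]] = F.
  case/and3P: scfF => _ /forallP outdeg_le1 _; apply/setP => -[x y].
  rewrite inE /= ffunE; case: pickP => [z xz|none]; last by rewrite none.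
  apply/eqP/idP => [[<-]|xy] //; congr Some.
  by apply: (card_le1_eqP (outdeg_le1 x)); rewrite inE.
by exists [ffun x => [pick y | (x, y) \in F]]; rewrite // inE -is_scf_arcs arcsF.
Qed.

Lemma sum_scforests (R : nmodType) (G : {set 'I_n * 'I_n} -> R) :
  (\sum_(F in scforests e) G F = \sum_(c | on_edges c && acyclic c) G (arcs c))%R.
Proof.
rewrite scforestsE big_imset /=; last by move=> c c' _ _; apply: arcs_inj.
by apply: eq_bigl => c; rewrite inE.
Qed.

End Forests.

Local Open Scope ring_scope.

Lemma sumr_mul_eq (R : pzSemiRingType) (I : finType) (F : I -> R) (x : I) :
  \sum_y F y * (x == y)%:R = F x.
Proof.
rewrite (bigD1 x) //= eqxx mulr1 big1 ?addr0 // => y yx.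
by rewrite eq_sym (negbTE yx) mulr0.
Qed.

Lemma sumr_option (R : nmodType) (T : finType) (F : option T -> R) :
  \sum_o F o = F None + \sum_x F (Some x).
Proof.
rewrite (bigID (pred1 None)) /= big_pred1_eq; congr (_ + _).
rewrite (reindex_omap Some id) //=; last by case.
by apply: eq_bigl => x; rewrite eqxx.
Qed.

Lemma prodr_bool (R : comPzSemiRingType) (I : finType) (P : pred I) (b : pred I) :
  \prod_(x | P x) (b x)%:R = [forall x, P x ==> b x]%:R :> R.
Proof.
have [/forallP Pb|] := boolP [forall x, P x ==> b x].
  by apply: big1 => x Px; rewrite (implyP (Pb x) Px).
rewrite negb_forall => /existsP [x]; rewrite negb_imply => /andP [Px nbx].
by rewrite (bigD1 x) //= (negbTE nbx) mul0r.
Qed.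

Lemma cofactor_delta_row (R : comPzRingType) (n : nat) (A : 'M[R]_n) k i :
  cofactor A k i = \det (\matrix_(x, y) if x == k then (y == i)%:R else A x y).
Proof.
rewrite (expand_det_row _ k) (bigD1 i) //= big1 ?addr0 => [|j ji]; last first.
  by rewrite mxE eqxx (negbTE ji) mul0r.
rewrite mxE !eqxx mul1r /cofactor; congr (_ * \det _); apply/matrixP => x y.
by rewrite !mxE eq_sym (negbTE (neq_lift _ _)).
Qed.

Lemma natr_card_set (R : pzSemiRingType) (T : finType) (A : {set T}) (P : pred T) :
  #|[set x in A | P x]|%:R = \sum_(x in A) (P x)%:R :> R.
Proof.
rewrite -sum1_card natr_sum big_mkcond [RHS]big_mkcond /=.
by apply: eq_bigr => x _; rewrite !inE; case: (x \in A); case: (P x).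
Qed.

Section ParentRows.

Variables (R : fieldType) (n : nat).
Local Notation pfun := {ffun 'I_n -> option 'I_n}.
Implicit Types (c : pfun) (x y : 'I_n).

Definition parent_row (o : option 'I_n) x y : R := (x == y)%:R - (o == Some y)%:R.

Definition parent_mx c : 'M[R]_n := \matrix_(x, y) parent_row (c x) x y.

Lemma det_parent_mx_acyclic c : acyclic c -> \det (parent_mx c) = 1.
Proof.
move=> acc; rewrite /determinant (bigD1 1%g) //= [X in _ + X]big1 ?addr0 => [|s s1].
  rewrite odd_perm1 expr0 mul1r; apply: big1 => x _; rewrite perm1 mxE /parent_row eqxx.
  suff -> : (c x == Some x) = false by rewrite subr0.
  apply/negbTE/negP => cxx; move/forallP: acc => /(_ x) /forallP /(_ x).
  by rewrite cxx connect0.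
suff [x0 /andP [sx0 cx0]] : exists x0, (s x0 != x0) && (c x0 != Some (s x0)).
  rewrite (bigD1 x0) //= mxE /parent_row eq_sym (negbTE sx0) (negbTE cx0).
  by rewrite subrr mul0r mulr0.
(* Otherwise heights would decrease along s, strictly somewhere, though their sum
   is s-invariant. *)
apply/existsP; apply: contraT; rewrite negb_exists => /forallP parent_s.
have {}parent_s x : s x != x -> c x = Some (s x).
  by move=> sx; move: (parent_s x); rewrite sx negbK => /eqP.
have [x1 sx1] : exists x1, s x1 != x1.
  apply/existsP; apply: contraNT s1; rewrite negb_exists => /forallP fix_s.
  by apply/eqP/permP => x; apply/eqP; rewrite perm1 -[_ == _]negbK fix_s.
have hle x : (height c (s x) <= height c x)%N.
  have [->|sx] := eqVneq (s x) x; first exact: leqnn.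
  exact/ltnW/height_parent/parent_s.
suff : (\sum_x height c (s x) < \sum_x height c x)%N.
  by rewrite [X in (_ < X)%N](reindex_inj (@perm_inj _ s)) /= ltnn.
rewrite (bigD1 x1) //= [X in (_ < X)%N](bigD1 x1) //= -addSn.
by rewrite leq_add ?(height_parent acc (parent_s _ sx1)) ?leq_sum.
Qed.

Lemma det_parent_mx_cyclic c : ~~ acyclic c -> \det (parent_mx c) = 0.
Proof.
move=> cyc; pose rootless x := [forall z, connect (parent_rel c) x z ==> (c z != None)].
have rootless_parent x y : c x = Some y -> rootless x = rootless y.
  move=> cxy; apply/forallP/forallP => rl z; apply/implyP => con.
    apply: (implyP (rl z)); apply: connect_trans con; apply: connect1.
    by rewrite /parent_rel cxy.
  have [<-|xz] := eqVneq x z; first by rewrite cxy.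
  exact: (implyP (rl z)) (connect_parent cxy con xz).
(* The indicator of the nodes from which no root is reachable is a kernel vector;
   nodes on a cycle make it nonzero. *)
rewrite -det_tr; apply/eqP/det0P; exists (\row_x (rootless x)%:R).
  move: cyc; rewrite negb_forall => /existsP [x]; rewrite negb_forall.
  case/existsP => y; rewrite negb_imply negbK => /andP [/eqP cxy cyx].
  have rlx : rootless x.
    apply/forallP => z; apply/implyP => cxz; apply: contraTneq isT => cz.
    have := connect_root cz (connect_on_cycle cxy cyx cxz).
    by move=> xz; move: cz; rewrite -xz cxy.
  by apply/negP => /eqP/rowP/(_ x) /eqP; rewrite !mxE rlx oner_eq0.
apply/rowP => x; rewrite !mxE.
under eq_bigr do rewrite !mxE /parent_row mulrBr.
rewrite sumrB sumr_mul_eq.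
case cx: (c x) => [y|].
  rewrite (eq_bigr (fun z => (rootless z)%:R * (y == z)%:R)) // sumr_mul_eq.
  by rewrite (rootless_parent _ _ cx) subrr.
rewrite big1 ?subr0 => [|z _]; last by rewrite mulr0.
suff -> : rootless x = false by [].
by apply/negbTE/negP => /forallP /(_ x); rewrite connect0 cx.
Qed.

Lemma det_parent_mx c : \det (parent_mx c) = (acyclic c)%:R.
Proof.
have [acc|cyc] := boolP (acyclic c); first exact: det_parent_mx_acyclic.
exact: det_parent_mx_cyclic.
Qed.

Lemma det_sum_parent_rows (w : 'I_n -> option 'I_n -> R) :
  \det (\matrix_(x, y) \sum_o w x o * parent_row o x y) =
  \sum_(c : pfun) (\prod_x w x (c x)) * (acyclic c)%:R.
Proof.
under [RHS]eq_bigr do rewrite -det_parent_mx.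
rewrite /determinant; transitivity (\sum_(s : 'S_n) \sum_(c : pfun)
    (-1) ^+ s * ((\prod_x w x (c x)) * \prod_x parent_row (c x) x (s x))).
  apply: eq_bigr => s _; under eq_bigr do rewrite mxE.
  by rewrite bigA_distr_bigA mulr_sumr; apply: eq_bigr => c _; rewrite big_split.
rewrite exchange_big; apply: eq_bigr => c _; rewrite mulr_sumr; apply: eq_bigr => s _.
by rewrite mulrCA; congr (_ * (_ * _)); apply: eq_bigr => x _; rewrite mxE.
Qed.

End ParentRows.

Section ForestCount.

Variables (R : fieldType) (n : nat) (e : rel 'I_n).
Local Notation pfun := {ffun 'I_n -> option 'I_n}.
Local Notation M := (1%:M + laplacian R e).
Implicit Types (c : pfun) (x y k : 'I_n).

Lemma one_laplacian_parent_rows :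
  M = \matrix_(x, y) \sum_o (on_edge e x o)%:R * parent_row R o x y.
Proof.
apply/matrixP => x y; rewrite !mxE sumr_option /parent_row /= subr0 mul1r.
have -> : (outdeg e x)%:R = \sum_z (e x z)%:R :> R.
  rewrite /outdeg -sum1_card natr_sum big_mkcond /=.
  by apply: eq_bigr => z _; rewrite inE; case: (e x z).
rewrite -[(e x y)%:R](sumr_mul_eq (fun z => (e x z)%:R)) mulr_sumr -sumrB.
congr (_ + _); apply: eq_bigr => z _.
by rewrite mulrBr [_ * (x == y)%:R]mulrC (inj_eq Some_inj) (eq_sym z).
Qed.

Lemma det_forest : \det M = #|scforests e|%:R.
Proof.
rewrite one_laplacian_parent_rows det_sum_parent_rows -sum1_card natr_sum.
rewrite sum_scforests [RHS]big_mkcond /=; apply: eq_bigr => c _.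
rewrite prodr_bool -/(on_edges e c).
by case: (on_edges e c); case: (acyclic c); rewrite ?mulr1 ?mulr0.
Qed.

(* Row k of the cofactor matrix is e_i = parent_row None k - parent_row (Some i) k. *)
Definition root_weight k i x (o : option 'I_n) : R :=
  if x == k then (o == None)%:R - (o == Some i)%:R else (on_edge e x o)%:R.

Lemma cofactor_parent_rows k i :
  cofactor M k i = \det (\matrix_(x, y) \sum_o root_weight k i x o * parent_row R o x y).
Proof.
rewrite cofactor_delta_row one_laplacian_parent_rows; congr (\det _).
apply/matrixP => x y; rewrite !mxE /root_weight; have [->|_] //= := eqVneq x k.
rewrite sumr_option (bigD1 i) //= big1 ?addr0 => [|z zi]; last first.
  by rewrite (inj_eq Some_inj) (negbTE zi) subrr mul0r.
by rewrite eqxx /parent_row /= (inj_eq Some_inj) [y == i]eq_sym; ring.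
Qed.

Definition swap_root i (o : option 'I_n) :=
  if o is Some j then (if j == i then None else o) else Some i.

Lemma swap_rootK i : involutive (swap_root i).
Proof.
case=> [j|] /=; last by rewrite eqxx.
by have [->|/negbTE ji] := eqVneq j i; rewrite ?eqxx //= ji.
Qed.

Definition toggle_root k i c := set_parent c k (swap_root i (c k)).

Lemma toggle_rootK k i : involutive (toggle_root k i).
Proof.
move=> c; apply/ffunP => x; rewrite !ffunE eqxx swap_rootK.
by have [->|] := eqVneq x k.
Qed.

(* Toggling the parent of k between none and i is a sign-reversing involution. *)
Lemma cofactor_forest k i :
  cofactor M k i = #|[set F in scforests e | froot F i == k]|%:R.
Proof.
pose W c := [forall x, (x != k) ==> on_edge e x (c x)].
have W_toggle c : W (toggle_root k i c) = W c.
  by apply: eq_forallb => x; rewrite ffunE; case: eqP.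
have W_root c : c k = None -> W c = on_edges e c.
  move=> ck; apply/forallP/forallP => on x; last exact/implyP.
  by have [->|/(implyP (on x))] := eqVneq x k; rewrite ?ck.
rewrite cofactor_parent_rows det_sum_parent_rows.
transitivity (\sum_(c : pfun)
  ((c k == None)%:R - (c k == Some i)%:R) * (W c)%:R * (acyclic c)%:R : R).
  apply: eq_bigr => c _; rewrite (bigD1 k) //= {1}/root_weight eqxx -prodr_bool.
  by congr (_ * _ * _); apply: eq_bigr => x /negbTE xk; rewrite /root_weight xk.
under eq_bigr do rewrite -mulrA mulrBl.
rewrite sumrB [X in _ - X](reindex_inj (can_inj (toggle_rootK k i))) -sumrB.
rewrite natr_card_set sum_scforests [RHS]big_mkcond /=; apply: eq_bigr => c _.
rewrite W_toggle {2}/toggle_root ffunE eqxx; case ck: (c k) => [j|] /=.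
  rewrite mul0r; have [_|ji] := eqVneq j i;
    rewrite /= ?(inj_eq Some_inj) ?(negbTE ji) mul0r subrr;
    by case: ifP => // /andP [_ acc]; rewrite froot_arcsE // ck.
rewrite eqxx !mul1r W_root // acyclic_set_parent //.
have [acc|] := boolP (acyclic c); last by rewrite andbF !mulr0 subrr.
rewrite froot_arcsE // ck andbT /=.
by case: (on_edges e c); case: connect; rewrite /= ?mulr0 ?mulr1 ?subrr ?subr0.
Qed.

End ForestCount.

Section ForestMatrix.

Variables (R : numFieldType) (n : nat) (e : rel 'I_n).
Local Notation M := (1%:M + laplacian R e).

Lemma card_scforests_gt0 : (0 < #|scforests e|)%N.
Proof.
apply/card_gt0P; exists (arcs [ffun=> None]); rewrite inE is_scf_arcs.
apply/andP; split; apply/forallP => x; first by rewrite ffunE.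
by apply/forallP => y; rewrite ffunE.
Qed.

Lemma forest_matrix_unit : M \in unitmx.
Proof. by rewrite unitmxE unitfE det_forest pnatr_eq0 -lt0n card_scforests_gt0. Qed.

Lemma forest_matrixE i k : forest_matrix R e i k =
  #|[set F in scforests e | froot F i == k]|%:R / #|scforests e|%:R.
Proof.
by rewrite /forest_matrix /invmx forest_matrix_unit !mxE -cofactor_forest det_forest mulrC.
Qed.

Lemma forest_matrix_diag i :
  forest_matrix R e i i * (1 + (outdeg e i)%:R) -
  \sum_(k in in_nbrs e i) forest_matrix R e i k = 1.
Proof.
rewrite -[RHS](_ : (invmx M *m M) i i = 1); last first.
  by rewrite mulVmx ?forest_matrix_unit // mxE eqxx.
rewrite mxE [RHS](eq_bigr (fun k => invmx M i k * (1 + (outdeg e k)%:R) * (i == k)%:R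
                             - invmx M i k * (e k i)%:R)) => [|k _]; last first.
  by rewrite !mxE [k == i]eq_sym; ring.
rewrite sumrB sumr_mul_eq; congr (_ - _); rewrite big_mkcond.
by apply: eq_bigr => k _; rewrite inE; case: (e k i); rewrite ?mulr1 ?mulr0.
Qed.

End ForestMatrix.

Section UniformMean.

Variables (R : numFieldType) (T : finType) (A : {set T}).
Hypothesis A_gt0 : (0 < #|A|)%N.
Implicit Types (X Y : T -> R) (P : pred T).

Definition mean X := #|A|%:R^-1 * \sum_(x in A) X x.

Definition variance X := mean (fun x => (X x - mean X) ^+ 2).

Lemma eq_mean X Y : X =1 Y -> mean X = mean Y.
Proof. by move=> eqXY; congr (_ * _); apply: eq_bigr. Qed.

Lemma eq_variance X Y : X =1 Y -> variance X = variance Y.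
Proof. by move=> eqXY; apply: eq_mean => x; rewrite (eq_mean eqXY) eqXY. Qed.

Lemma mean_sum (I : finType) (K : pred I) (X : I -> T -> R) :
  mean (fun x => \sum_(k in K) X k x) = \sum_(k in K) mean (X k).
Proof. by rewrite /mean exchange_big mulr_sumr. Qed.

Lemma mean_affine a b X : mean (fun x => a + b * X x) = a + b * mean X.
Proof.
rewrite /mean big_split /= sumr_const -mulr_sumr mulrDr mulrCA -[a *+ _]mulr_natl mulKf //.
by rewrite pnatr_eq0 -lt0n.
Qed.

Lemma variance_affine a b X : variance (fun x => a + b * X x) = b ^+ 2 * variance X.
Proof.
rewrite /variance mean_affine -[RHS]add0r -(mean_affine 0).
by apply: eq_mean => x; rewrite add0r; ring.
Qed.

Lemma mean_indicator P : mean (fun x => (P x)%:R) = #|[set x in A | P x]|%:R / #|A|%:R.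
Proof. by rewrite /mean natr_card_set mulrC. Qed.

Lemma mean_indicator_ge0 P : 0 <= mean (fun x => (P x)%:R).
Proof. by rewrite mean_indicator divr_ge0. Qed.

Lemma mean_indicator_le1 P : mean (fun x => (P x)%:R) <= 1.
Proof.
rewrite mean_indicator ler_pdivrMr ?ltr0n // mul1r ler_nat subset_leq_card //.
by apply/subsetP => x; rewrite inE => /andP [].
Qed.

Lemma variance_indicator P :
  variance (fun x => (P x)%:R) = mean (fun x => (P x)%:R) * (1 - mean (fun x => (P x)%:R)).
Proof.
set p := mean _; rewrite /variance.
rewrite (eq_mean (Y := fun x => p ^+ 2 + (1 - 2 * p) * (P x)%:R)) => [|x].
  by rewrite mean_affine -/p; ring.
by rewrite -/p; case: (P x); rewrite /= ?mulr1n ?mulr0n; ring.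
Qed.

End UniformMean.

Section Estimators.

Variables (R : realFieldType) (n : nat) (e : rel 'I_n) (i : 'I_n).
Local Notation d := (outdeg e i)%:R.
Implicit Types (F : {set 'I_n * 'I_n}) (X : {set 'I_n * 'I_n} -> R).

Lemma unif_expE X : unif_exp e X = mean (scforests e) X.
Proof. by []. Qed.

Lemma unif_varE X : unif_var e X = variance (scforests e) X.
Proof. by []. Qed.

Lemma unif_exp_omega_hat k : unif_exp e (omega_hat R i k) = forest_matrix R e i k.
Proof. by rewrite unif_expE /omega_hat mean_indicator forest_matrixE. Qed.

Lemma unif_var_omega_hat k : unif_var e (omega_hat R i k) =
  forest_matrix R e i k * (1 - forest_matrix R e i k).
Proof.
by rewrite -unif_exp_omega_hat unif_varE /omega_hat variance_indicator ?card_scforests_gt0.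
Qed.

Lemma sum_omega_hat (K : {set 'I_n}) F :
  \sum_(k in K) omega_hat R i k F = (froot F i \in K)%:R.
Proof.
rewrite /omega_hat; have [rK|rNK] := boolP (froot F i \in K).
  rewrite (bigD1 (froot F i)) //= eqxx big1 ?addr0 // => k /andP [_ kr].
  by rewrite eq_sym (negbTE kr).
by rewrite big1 // => k kK; case: eqP => // rk; move: rNK; rewrite rk kK.
Qed.

Lemma unif_exp_root_in (K : {set 'I_n}) :
  unif_exp e (fun F => (froot F i \in K)%:R) = \sum_(k in K) forest_matrix R e i k.
Proof.
under [RHS]eq_bigr do rewrite -unif_exp_omega_hat unif_expE.
by rewrite -mean_sum unif_expE; apply: eq_mean => F; rewrite sum_omega_hat.
Qed.

Lemma omega_barE F :
  omega_bar R e i F = (1 + d)^-1 + (1 + d)^-1 * (froot F i \in in_nbrs e i)%:R.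
Proof. by rewrite /omega_bar sum_omega_hat mulrDr mulr1. Qed.

End Estimators.

Lemma bernoulli_var_le (R : realFieldType) (m q : R) (d : nat) :
  0 <= q <= 1 -> m <= 1 -> m * (1 + d%:R) = 1 + q ->
  (1 + d%:R) ^- 2 * (q * (1 - q)) <= m * (1 - m).
Proof.
move=> /andP [q0 q1] m1 mE.
(* Fails for real 0 < d < 1: it needs d = 0 (which forces q = 0) or d >= 1. *)
rewrite mulrC ler_pdivrMr ?exprn_gt0 ?ltr_pwDl //.
have [d0|d_gt0] := posnP d; first by move: mE; rewrite d0 addr0 !mulr1 => mE; nra.
have : 1 <= d%:R :> R by rewrite ler1n.
nra.
Qed.

Theorem lemma4p3 (R : realFieldType) (n : nat) (e : rel 'I_n) (i : 'I_n) :
  simple_digraph e ->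
  let omega := forest_matrix R e in
  let d := (outdeg e i)%:R : R in
  [/\ unif_exp e (omega_bar R e i) = omega i i,
      unif_var e (omega_bar R e i) =
        3 * omega i i / (1 + d) - 2 / (1 + d) ^+ 2 - omega i i ^+ 2 &
      unif_var e (omega_bar R e i) <= unif_var e (omega_hat R i i)].
Proof.
move=> _ omega d; set c := 1 + d.
pose q : R := unif_exp e (fun F => (froot F i \in in_nbrs e i)%:R).
have scf_gt0 := card_scforests_gt0 e.
have c0 : c != 0 by rewrite /c /d paddr_eq0 ?oner_eq0.
have diag : omega i i * c = 1 + q.
  by rewrite /q unif_exp_root_in -(forest_matrix_diag R e i) subrK.
have Ebar : unif_exp e (omega_bar R e i) = c^-1 * (1 + q).
  by rewrite unif_expE (eq_mean _ (omega_barE R e i)) mean_affine // mulrDr mulr1.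
have Vbar : unif_var e (omega_bar R e i) = c ^- 2 * (q * (1 - q)).
  rewrite unif_varE (eq_variance _ (omega_barE R e i)) variance_affine //.
  by rewrite variance_indicator // exprVn.
split.
- by rewrite Ebar -diag mulrC mulfK.
- by rewrite Vbar -[q](addKr 1) -diag; field.
- rewrite Vbar unif_var_omega_hat; apply: bernoulli_var_le diag.
    by rewrite mean_indicator_ge0 ?mean_indicator_le1.
  by rewrite -unif_exp_omega_hat mean_indicator_le1.
Qed.
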